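(* Let $\varphi \in \mathcal{L}^s(\Theta;\tau)$ for some $s\in\{\pm,+,-\}$, let $\rho$ be a valuation of $\Theta$ and let $i$ be an iteration variable. If $i \mathrel{\mathrm{Pos}} \varphi$, then $n \le m$ implies $[\![\varphi]\!]\rho[n/i] \subseteq [\![\varphi]\!]\rho[m/i]$. If $i \mathrel{\mathrm{Neg}} \varphi$, then $m \le n$ implies $[\![\varphi]\!]\rho[n/i] \subseteq [\![\varphi]\!]\rho[m/i]$.
   Context: Pure types: closed types of $\tau ::= \mathbf{1} \mid \tau\times\tau \mid \tau\to\tau \mid \tau+\tau \mid \alpha \mid \mu\alpha.\tau$, interpreted as Scott domains: $[\![\mathbf{1}]\!]=\{\bot\le\top\}$; products componentwise with projections $\pi_1,\pi_2$; $[\![\tau\to\sigma]\!]$ = Scott-continuous functions with pointwise order; $[\![\tau_1+\tau_2]\!]$ = disjoint union with a new bottom, with injections $\mathrm{inj}_i$; $[\![\mu\alpha.\tau]\!]$ = canonical bilimit solution with inverse isomorphisms $\mathrm{fold}:[\![\tau[\mu\alpha.\tau/\alpha]]\!]\to[\![\mu\alpha.\tau]\!]$, $\mathrm{unfold}$. Iteration terms: $t ::= i \mid 0 \mid t+1$. Fixpoint contexts $\Theta = X_1:\sigma_1,\dots,X_n:\sigma_n$. For $s\in\{\pm,+,-\}$, $\mathcal{L}^s(\Theta;\tau)$ is generated by: $\mathrm{True},\mathrm{False}$; closure under $\wedge,\vee$; $\langle()\rangle\in\mathcal{L}^s(\Theta;\mathbf{1})$; $\langle\pi_i\rangle\varphi$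 (type $\tau_1\times\tau_2$, $\varphi$ of type $\tau_i$); $\langle\mathrm{inj}_i\rangle\varphi$ (type $\tau_1+\tau_2$, $\varphi$ of type $\tau_i$); $\langle\mathrm{fold}\rangle\varphi$ (type $\mu\alpha.\tau$, $\varphi$ of type $\tau[\mu\alpha.\tau/\alpha]$); $X$ if $(X:\tau)\in\Theta$; weakening of $\Theta$; $(\mu^t X)\varphi,(\nu^t X)\varphi\in\mathcal{L}^s(\Theta;\tau)$ if $\varphi\in\mathcal{L}^s(\Theta,X:\tau;\tau)$; $(\exists i)\varphi\in\mathcal{L}^+(\Theta;\tau)$ if $\varphi\in\mathcal{L}^+(\Theta;\tau)$ and $i \mathrel{\mathrm{Pos}} \varphi$; $(\forall i)\varphi\in\mathcal{L}^-(\Theta;\tau)$ if $\varphi\in\mathcal{L}^-(\Theta;\tau)$ and $i\mathrel{\mathrm{Neg}}\varphi$; $\psi\Rightarrow\varphi\in\mathcal{L}^s(\,;\sigma\to\tau)$ if $\psi\in\mathcal{L}^{-s}(\,;\sigma)$ and $\varphi\in\mathcal{L}^s(\,;\tau)$, where $-\pm=\pm$, $-+=-$, $--=+$. The predicates Pos, Neg are inductively defined: $i\mathrel{\mathrm{Pos}}\varphi$ and $i\mathrel{\mathrm{Neg}}\varphi$ hold if $i$ not free in $\varphi$; both preserved by $\wedge,\vee$ and the modalities $\langle\pi_j\rangle,\langle\mathrm{inj}_j\rangle,\langle\mathrm{fold}\rangle$; $i\mathrel{\mathrm{Pos}}(\psi\Rightarrow\varphi)$ if $i\mathrel{\mathrm{Neg}}\psi$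 and $i\mathrel{\mathrm{Pos}}\varphi$; $i\mathrel{\mathrm{Neg}}(\psi\Rightarrow\varphi)$ if $i\mathrel{\mathrm{Pos}}\psi$ and $i\mathrel{\mathrm{Neg}}\varphi$; $i\mathrel{\mathrm{Pos}}(\exists j)\varphi$ if $i\mathrel{\mathrm{Pos}}\varphi$; $i\mathrel{\mathrm{Neg}}(\forall j)\varphi$ if $i\mathrel{\mathrm{Neg}}\varphi$; $i\mathrel{\mathrm{Pos}}(\mu^tX)\varphi$ if $i\mathrel{\mathrm{Pos}}\varphi$; $i\mathrel{\mathrm{Pos}}(\nu^tX)\varphi$ if $i\mathrel{\mathrm{Pos}}\varphi$ and $i$ not free in $t$; $i\mathrel{\mathrm{Neg}}(\nu^tX)\varphi$ if $i\mathrel{\mathrm{Neg}}\varphi$; $i\mathrel{\mathrm{Neg}}(\mu^tX)\varphi$ if $i\mathrel{\mathrm{Neg}}\varphi$ and $i$ not free in $t$. Semantics: a valuation $\rho$ of $\Theta$ maps each $(X:\sigma)\in\Theta$ to $\rho(X)\subseteq[\![\sigma]\!]$ and iteration variables to naturals ($[\![t]\!]\rho\in\mathbb{N}$). $[\![\mathrm{True}]\!]\rho=[\![\tau]\!]$, $[\![\mathrm{False}]\!]\rho=\emptyset$, $\wedge,\vee$ are $\cap,\cup$, $[\![X]\!]\rho=\rho(X)$, $[\![\langle()\rangle]\!]\rho=\{\top\}$, $[\![\langle\pi_i\rangle\varphi]\!]\rho=\{x\mid \pi_i(x)\in[\![\varphi]\!]\rho\}$, $[\![\langle\mathrm{inj}_i\rangle\varphi]\!]\rho=\{\mathrm{inj}_i(x)\mid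 x\in[\![\varphi]\!]\rho\}$, $[\![\langle\mathrm{fold}\rangle\varphi]\!]\rho=\{x\mid\mathrm{unfold}(x)\in[\![\varphi]\!]\rho\}$, $[\![\psi\Rightarrow\varphi]\!]\rho=\{f\mid\forall x\in[\![\psi]\!]\rho,\ f(x)\in[\![\varphi]\!]\rho\}$, $[\![(\exists i)\varphi]\!]\rho=\bigcup_{n}[\![\varphi]\!]\rho[n/i]$, $[\![(\forall i)\varphi]\!]\rho=\bigcap_{n}[\![\varphi]\!]\rho[n/i]$, and with $F(S)=[\![\varphi]\!]\rho[S/X]$, $n=[\![t]\!]\rho$: $[\![(\mu^tX)\varphi]\!]\rho=F^n(\emptyset)$, $[\![(\nu^tX)\varphi]\!]\rho=F^n([\![\tau]\!])$. *)

From Stdlib Require Import List Arith PeanoNat.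
Import ListNotations.
Set Implicit Arguments.

(** * Pure types (de Bruijn type variables; alpha = TVar) *)
Inductive ty : Type :=
| TUnit : ty
| TProd : ty -> ty -> ty
| TArr  : ty -> ty -> ty
| TSum  : ty -> ty -> ty
| TVar  : nat -> ty
| TMu   : ty -> ty.

Fixpoint shift (c : nat) (t : ty) : ty :=
  match t with
  | TUnit => TUnit
  | TProd a b => TProd (shift c a) (shift c b)
  | TArr a b => TArr (shift c a) (shift c b)
  | TSum a b => TSum (shift c a) (shift c b)
  | TVar k => if k <? c then TVar k else TVar (S k)
  | TMu a => TMu (shift (S c) a)
  end.

Fixpoint subst (k : nat) (u : ty) (t : ty) : ty :=
  match t with
  | TUnit => TUnit
  | TProd a b => TProd (subst k u a) (subst k u b)
  | TArr a b => TArr (subst k u a) (subst k u b)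
  | TSum a b => TSum (subst k u a) (subst k u b)
  | TVar m => if m =? k then u else if m <? k then TVar m else TVar (pred m)
  | TMu a => TMu (subst (S k) (shift 0 u) a)
  end.

Definition unroll (t : ty) : ty := subst 0 (TMu t) t.

(** An abstract interpretation: carriers with the structural maps used by the
   semantics (top of [[1]], projections, injections, fold/unfold inverse
   isomorphisms, and function application).  The Scott-domain model of the
   paper is an instance. *)
Unset Implicit Arguments.
Record model : Type := {
  D : ty -> Type;
  mtop : D TUnit;
  mpi1 : forall a b, D (TProd a b) -> D a;
  mpi2 : forall a b, D (TProd a b) -> D b;
  minj1 : forall a b, D a -> D (TSum a b);
  minj2 : forall a b, D b -> D (TSum a b);
  mfold : forall t, D (unroll t) -> D (TMu t);
  munfold : forall t, D (TMu t) -> D (unroll t);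
  mfold_unfold : forall (t : ty) (x : D (TMu t)), mfold t (munfold t x) = x;
  munfold_fold : forall (t : ty) (x : D (unroll t)), munfold t (mfold t x) = x;
  mapp : forall a b, D (TArr a b) -> D a -> D b
}.

Set Implicit Arguments.
Inductive iterm : Type :=
| IVar : nat -> iterm
| IZero : iterm
| ISucc : iterm -> iterm.

Fixpoint ieval (iota : nat -> nat) (t : iterm) : nat :=
  match t with
  | IVar i => iota i
  | IZero => 0
  | ISucc t => S (ieval iota t)
  end.

Fixpoint ioccurs (i : nat) (t : iterm) : bool :=
  match t with
  | IVar j => i =? j
  | IZero => false
  | ISucc t => ioccurs i t
  end.

Definition ctx := list ty.

Inductive var : ctx -> ty -> Type :=
| VZ : forall Th t, var (t :: Th) t
| VS : forall Th s t, var Th t -> var (s :: Th) t.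

Inductive form : ctx -> ty -> Type :=
| FTrue  : forall Th t, form Th t
| FFalse : forall Th t, form Th t
| FAnd   : forall Th t, form Th t -> form Th t -> form Th t
| FOr    : forall Th t, form Th t -> form Th t -> form Th t
| FUnit  : forall Th, form Th TUnit
| FPi1   : forall Th a b, form Th a -> form Th (TProd a b)
| FPi2   : forall Th a b, form Th b -> form Th (TProd a b)
| FInj1  : forall Th a b, form Th a -> form Th (TSum a b)
| FInj2  : forall Th a b, form Th b -> form Th (TSum a b)
| FFold  : forall Th t, form Th (unroll t) -> form Th (TMu t)
| FVar   : forall Th t, var Th t -> form Th t
| FWk    : forall Th s t, form Th t -> form (s :: Th) t
| FMu    : forall Th t, iterm -> form (t :: Th) t -> form Th t
| FNu    : forall Th t, iterm -> form (t :: Th) t -> form Th t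
| FEx    : forall Th t, nat -> form Th t -> form Th t
| FAll   : forall Th t, nat -> form Th t -> form Th t
| FImp   : forall a b, form [] a -> form [] b -> form [] (TArr a b).

Fixpoint occurs (i : nat) {Th t} (f : form Th t) : bool :=
  match f with
  | FTrue _ _ | FFalse _ _ | FUnit _ | FVar _ => false
  | FAnd f1 f2 | FOr f1 f2 => occurs i f1 || occurs i f2
  | FPi1 _ f | FPi2 _ f | FInj1 _ f | FInj2 _ f | FFold _ f | FWk _ f => occurs i f
  | FMu tm f | FNu tm f => ioccurs i tm || occurs i f
  | FEx j f | FAll j f => if i =? j then false else occurs i f
  | FImp f1 f2 => occurs i f1 || occurs i f2
  end.

Inductive Pos (i : nat) : forall Th t, form Th t -> Prop :=
| Pos_nf : forall Th t (f : form Th t), occurs i f = false -> Pos i f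
| Pos_and : forall Th t (f g : form Th t), Pos i f -> Pos i g -> Pos i (FAnd f g)
| Pos_or : forall Th t (f g : form Th t), Pos i f -> Pos i g -> Pos i (FOr f g)
| Pos_pi1 : forall Th a b (f : form Th a), Pos i f -> Pos i (FPi1 b f)
| Pos_pi2 : forall Th a b (f : form Th b), Pos i f -> Pos i (FPi2 a f)
| Pos_inj1 : forall Th a b (f : form Th a), Pos i f -> Pos i (FInj1 b f)
| Pos_inj2 : forall Th a b (f : form Th b), Pos i f -> Pos i (FInj2 a f)
| Pos_fold : forall Th t (f : form Th (unroll t)), Pos i f -> Pos i (FFold t f)
| Pos_wk : forall Th s t (f : form Th t), Pos i f -> Pos i (FWk s f)
| Pos_imp : forall a b (f : form [] a) (g : form [] b),
    Neg i f -> Pos i g -> Pos i (FImp f g)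
| Pos_ex : forall Th t j (f : form Th t), Pos i f -> Pos i (FEx j f)
| Pos_mu : forall Th t tm (f : form (t :: Th) t), Pos i f -> Pos i (FMu tm f)
| Pos_nu : forall Th t tm (f : form (t :: Th) t),
    Pos i f -> ioccurs i tm = false -> Pos i (FNu tm f)
with Neg (i : nat) : forall Th t, form Th t -> Prop :=
| Neg_nf : forall Th t (f : form Th t), occurs i f = false -> Neg i f
| Neg_and : forall Th t (f g : form Th t), Neg i f -> Neg i g -> Neg i (FAnd f g)
| Neg_or : forall Th t (f g : form Th t), Neg i f -> Neg i g -> Neg i (FOr f g)
| Neg_pi1 : forall Th a b (f : form Th a), Neg i f -> Neg i (FPi1 b f)
| Neg_pi2 : forall Th a b (f : form Th b), Neg i f -> Neg i (FPi2 a f)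
| Neg_inj1 : forall Th a b (f : form Th a), Neg i f -> Neg i (FInj1 b f)
| Neg_inj2 : forall Th a b (f : form Th b), Neg i f -> Neg i (FInj2 a f)
| Neg_fold : forall Th t (f : form Th (unroll t)), Neg i f -> Neg i (FFold t f)
| Neg_wk : forall Th s t (f : form Th t), Neg i f -> Neg i (FWk s f)
| Neg_imp : forall a b (f : form [] a) (g : form [] b),
    Pos i f -> Neg i g -> Neg i (FImp f g)
| Neg_all : forall Th t j (f : form Th t), Neg i f -> Neg i (FAll j f)
| Neg_nu : forall Th t tm (f : form (t :: Th) t), Neg i f -> Neg i (FNu tm f)
| Neg_mu : forall Th t tm (f : form (t :: Th) t),
    Neg i f -> ioccurs i tm = false -> Neg i (FMu tm f).

Inductive pol : Type := PBoth | PPlus | PMinus.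

Definition negp (s : pol) : pol :=
  match s with PBoth => PBoth | PPlus => PMinus | PMinus => PPlus end.

Inductive inL : pol -> forall Th t, form Th t -> Prop :=
| L_true : forall s Th t, inL s (FTrue Th t)
| L_false : forall s Th t, inL s (FFalse Th t)
| L_and : forall s Th t (f g : form Th t), inL s f -> inL s g -> inL s (FAnd f g)
| L_or : forall s Th t (f g : form Th t), inL s f -> inL s g -> inL s (FOr f g)
| L_unit : forall s Th, inL s (FUnit Th)
| L_pi1 : forall s Th a b (f : form Th a), inL s f -> inL s (FPi1 b f)
| L_pi2 : forall s Th a b (f : form Th b), inL s f -> inL s (FPi2 a f)
| L_inj1 : forall s Th a b (f : form Th a), inL s f -> inL s (FInj1 b f)
| L_inj2 : forall s Th a b (f : form Th b), inL s f -> inL s (FInj2 a f)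
| L_fold : forall s Th t (f : form Th (unroll t)), inL s f -> inL s (FFold t f)
| L_var : forall s Th t (x : var Th t), inL s (FVar x)
| L_wk : forall s Th u t (f : form Th t), inL s f -> inL s (FWk u f)
| L_mu : forall s Th t tm (f : form (t :: Th) t), inL s f -> inL s (FMu tm f)
| L_nu : forall s Th t tm (f : form (t :: Th) t), inL s f -> inL s (FNu tm f)
| L_ex : forall Th t i (f : form Th t), inL PPlus f -> Pos i f -> inL PPlus (FEx i f)
| L_all : forall Th t i (f : form Th t), inL PMinus f -> Neg i f -> inL PMinus (FAll i f)
| L_imp : forall s a b (f : form [] a) (g : form [] b),
    inL (negp s) f -> inL s g -> inL s (FImp f g).

Definition set (A : Type) := A -> Prop.

Fixpoint env (M : model) (Th : ctx) : Type :=
  match Th with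
  | [] => unit
  | t :: Th' => (set (D M t) * env M Th')%type
  end.

Fixpoint lookup (M : model) {Th t} (x : var Th t) : env M Th -> set (D M t) :=
  match x in var Th t return env M Th -> set (D M t) with
  | VZ _ _ => fun e => fst e
  | VS _ x' => fun e => lookup M x' (snd e)
  end.

Definition upd (iota : nat -> nat) (i n : nat) : nat -> nat :=
  fun j => if j =? i then n else iota j.

Fixpoint iter {A} (n : nat) (F : A -> A) (x : A) : A :=
  match n with 0 => x | S n => F (iter n F x) end.

Fixpoint sem (M : model) {Th t} (f : form Th t)
  : env M Th -> (nat -> nat) -> set (D M t) :=
  match f in form Th t return env M Th -> (nat -> nat) -> set (D M t) with
  | FTrue _ _ => fun _ _ _ => True
  | FFalse _ _ => fun _ _ _ => False
  | FAnd f1 f2 => fun r io x => sem M f1 r io x /\ sem M f2 r io x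
  | FOr f1 f2 => fun r io x => sem M f1 r io x \/ sem M f2 r io x
  | FUnit _ => fun _ _ x => x = mtop M
  | FPi1 _ f => fun r io x => sem M f r io (mpi1 M _ _ x)
  | FPi2 _ f => fun r io x => sem M f r io (mpi2 M _ _ x)
  | FInj1 _ f => fun r io x => exists y, sem M f r io y /\ x = minj1 M _ _ y
  | FInj2 _ f => fun r io x => exists y, sem M f r io y /\ x = minj2 M _ _ y
  | FFold _ f => fun r io x => sem M f r io (munfold M _ x)
  | FVar x => fun r _ => lookup M x r
  | FWk _ f => fun r io => sem M f (snd r) io
  | FMu tm f => fun r io =>
      iter (ieval io tm) (fun S => sem M f (S, r) io) (fun _ => False)
  | FNu tm f => fun r io =>
      iter (ieval io tm) (fun S => sem M f (S, r) io) (fun _ => True)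
  | FEx j f => fun r io x => exists n, sem M f r (upd io j n) x
  | FAll j f => fun r io x => forall n, sem M f r (upd io j n) x
  | FImp f1 f2 => fun _ io g =>
      forall x, sem M f1 tt io x -> sem M f2 tt io (mapp M _ _ g x)
  end.

(* Every construct
   except [=>] is monotone both in the semantics of its subformulas and in the
   valuation of the fixpoint variables, while [=>] swaps the two polarities.
   For the bounded fixpoints, the approximants F^k(empty) of [mu] increase and
   the approximants F^k(full) of [nu] decrease with k, so enlarging the bound
   [t] enlarges [(mu^t X) phi] and shrinks [(nu^t X) phi]: this is why [i] may
   occur in the bound of [mu] only positively and in that of [nu] only
   negatively. *)
From Stdlib Require Import List PeanoNat Lia Bool FunctionalExtensionality.
Import ListNotations.

Definition subset {A : Type} (X Y : set A) : Prop := forall x, X x -> Y x.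

Definition monotone {A : Type} (F : set A -> set A) : Prop :=
  forall P Q, subset P Q -> subset (F P) (F Q).

Section Iteration.

Variable A : Type.
Implicit Types (F G : set A -> set A) (X Y : set A).

Lemma iter_subset F G X Y k :
  subset X Y -> (forall P Q, subset P Q -> subset (F P) (G Q)) ->
  subset (iter k F X) (iter k G Y).
Proof. intros HXY HFG; induction k; simpl; auto. Qed.

Lemma iter_postfixed_increasing F X k k' :
  monotone F -> subset X (F X) -> k <= k' -> subset (iter k F X) (iter k' F X).
Proof.
  intros HF HX Hk.
  assert (Hstep : forall j, subset (iter j F X) (iter (S j) F X)).
  { induction j as [|j IH]; [exact HX | exact (HF _ _ IH)]. }
  induction Hk as [|k' _ IH]; intros x Hx; [exact Hx | exact (Hstep _ _ (IH _ Hx))].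
Qed.

Lemma iter_prefixed_decreasing F X k k' :
  monotone F -> subset (F X) X -> k' <= k -> subset (iter k F X) (iter k' F X).
Proof.
  intros HF HX Hk.
  assert (Hstep : forall j, subset (iter (S j) F X) (iter j F X)).
  { induction j as [|j IH]; [exact HX | exact (HF _ _ IH)]. }
  induction Hk as [|k _ IH]; intros x Hx; [exact Hx | exact (IH _ (Hstep _ _ Hx))].
Qed.

End Iteration.

Fixpoint env_subset (M : model) (Th : ctx) : env M Th -> env M Th -> Prop :=
  match Th return env M Th -> env M Th -> Prop with
  | [] => fun _ _ => True
  | t :: Th' => fun r r' => subset (fst r) (fst r') /\ env_subset M Th' (snd r) (snd r')
  end.

Lemma env_subset_refl M Th (r : env M Th) : env_subset M Th r r.
Proof.
  induction Th as [|t Th IH]; simpl; [exact I | split; [intros x Hx; exact Hx | apply IH]].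
Qed.

Lemma lookup_monotone M Th t (x : var Th t) r r' :
  env_subset M Th r r' -> subset (lookup M x r) (lookup M x r').
Proof. induction x; simpl; intros [Hhd Htl]; auto. Qed.

Lemma sem_monotone_env M Th t (f : form Th t) r r' io :
  env_subset M Th r r' -> subset (sem M f r io) (sem M f r' io).
Proof.
  revert r r' io.
  induction f; simpl; intros r r' io Hr; try solve [unfold subset in *; firstorder].
  - apply lookup_monotone; exact Hr.
  - apply iter_subset; [intros x [] | intros P Q HPQ; apply IHf; simpl; auto].
  - apply iter_subset; [intros x Hx; exact Hx | intros P Q HPQ; apply IHf; simpl; auto].
  - intros x [k Hk]; exists k; exact (IHf r r' _ Hr x Hk).
Qed.

Lemma sem_body_monotone M Th t (f : form (t :: Th) t) r io :
  monotone (fun S => sem M f (S, r) io).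
Proof. intros P Q HPQ; apply sem_monotone_env; split; [exact HPQ | apply env_subset_refl]. Qed.

Lemma ieval_coincide io io' tm :
  (forall j, ioccurs j tm = true -> io j = io' j) -> ieval io tm = ieval io' tm.
Proof.
  induction tm as [k| |tm IH]; simpl; intros Hagree; auto.
  apply Hagree, Nat.eqb_refl.
Qed.

Lemma agree_orb (p q : nat -> bool) (io io' : nat -> nat) :
  (forall j, p j || q j = true -> io j = io' j) ->
  (forall j, p j = true -> io j = io' j) /\ (forall j, q j = true -> io j = io' j).
Proof.
  intros Hagree; split; intros j Hj; apply Hagree; rewrite Hj; [reflexivity | apply orb_true_r].
Qed.

Lemma agree_upd (p : nat -> bool) io io' n k :
  (forall j, (if j =? n then false else p j) = true -> io j = io' j) ->
  forall j, p j = true -> upd io n k j = upd io' n k j.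
Proof.
  intros Hagree j Hj; unfold upd.
  destruct (j =? n) eqn:Hjn; [reflexivity |].
  apply Hagree; rewrite Hjn; exact Hj.
Qed.

Lemma sem_coincide M Th t (f : form Th t) r io io' :
  (forall j, occurs j f = true -> io j = io' j) ->
  subset (sem M f r io) (sem M f r io').
Proof.
  revert r io io'.
  induction f; simpl; intros r io io' Hagree;
    try apply agree_orb in Hagree as [Hl Hr]; try solve [unfold subset in *; firstorder].
  - rewrite (ieval_coincide io io') by exact Hl.
    apply iter_subset; [intros x [] | intros P Q HPQ x Hx].
    exact (IHf _ io io' Hr x (sem_body_monotone M Th t f r io P Q HPQ x Hx)).
  - rewrite (ieval_coincide io io') by exact Hl.
    apply iter_subset; [intros x Hx; exact Hx | intros P Q HPQ x Hx].
    exact (IHf _ io io' Hr x (sem_body_monotone M Th t f r io P Q HPQ x Hx)).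
  - intros x [k Hk]; exists k; exact (IHf r _ _ (agree_upd _ _ _ _ _ Hagree) x Hk).
  - intros x Hx k; exact (IHf r _ _ (agree_upd _ _ _ _ _ Hagree) x (Hx k)).
  - intros g Hg x Hx; apply (IHf2 tt io io' Hr), Hg.
    apply (IHf1 tt io' io); [intros j Hj; symmetry; exact (Hl j Hj) | exact Hx].
Qed.

Lemma upd_shadow io i n k : upd (upd io i n) i k = upd io i k.
Proof.
  apply functional_extensionality; intro j; unfold upd; destruct (j =? i); reflexivity.
Qed.

Lemma upd_comm io i j n k : i <> j -> upd (upd io i n) j k = upd (upd io j k) i n.
Proof.
  intro Hij; apply functional_extensionality; intro l; unfold upd.
  destruct (Nat.eqb_spec l j), (Nat.eqb_spec l i); congruence.
Qed.

Lemma ieval_upd_monotone io i tm n m :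
  n <= m -> ieval (upd io i n) tm <= ieval (upd io i m) tm.
Proof.
  intro Hnm; induction tm as [j| |tm IH]; simpl; [unfold upd; destruct (j =? i) | |]; lia.
Qed.

Lemma ieval_upd_notin io i tm n m :
  ioccurs i tm = false -> ieval (upd io i n) tm = ieval (upd io i m) tm.
Proof.
  intro Hi; apply ieval_coincide; intros j Hj; unfold upd.
  destruct (Nat.eqb_spec j i) as [-> | _]; [congruence | reflexivity].
Qed.

Lemma sem_upd_notin M Th t (f : form Th t) r io i n m :
  occurs i f = false -> subset (sem M f r (upd io i n)) (sem M f r (upd io i m)).
Proof.
  intro Hi; apply sem_coincide; intros j Hj; unfold upd.
  destruct (Nat.eqb_spec j i) as [-> | _]; [congruence | reflexivity].
Qed.

Definition sem_increasing_in (M : model) (i : nat) {Th t} (f : form Th t) : Prop :=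
  forall r io n m, n <= m -> subset (sem M f r (upd io i n)) (sem M f r (upd io i m)).

Definition sem_decreasing_in (M : model) (i : nat) {Th t} (f : form Th t) : Prop :=
  forall r io n m, m <= n -> subset (sem M f r (upd io i n)) (sem M f r (upd io i m)).

Section ConstructMonotonicity.

Variables (M : model) (i : nat).

Lemma sem_upd_under_binder {Th t} (f : form Th t) r io j n m :
  (forall io', subset (sem M f r (upd io' i n)) (sem M f r (upd io' i m))) ->
  forall k, subset (sem M f r (upd (upd io i n) j k)) (sem M f r (upd (upd io i m) j k)).
Proof.
  intros Hf k.
  destruct (Nat.eq_dec i j) as [<- | Hij].
  - rewrite !upd_shadow; intros x Hx; exact Hx.
  - rewrite !(upd_comm io i j) by exact Hij; apply Hf.
Qed.

Lemma ex_increasing_in Th t j (f : form Th t) :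
  sem_increasing_in M i f -> sem_increasing_in M i (FEx j f).
Proof.
  intros Hf r io n m Hnm x [k Hk]; exists k.
  exact (sem_upd_under_binder f r io j n m (fun io' => Hf r io' n m Hnm) k x Hk).
Qed.

Lemma all_decreasing_in Th t j (f : form Th t) :
  sem_decreasing_in M i f -> sem_decreasing_in M i (FAll j f).
Proof.
  intros Hf r io n m Hmn x Hx k.
  exact (sem_upd_under_binder f r io j n m (fun io' => Hf r io' n m Hmn) k x (Hx k)).
Qed.

Lemma imp_increasing_in a b (f : form [] a) (g : form [] b) :
  sem_decreasing_in M i f -> sem_increasing_in M i g -> sem_increasing_in M i (FImp f g).
Proof.
  intros Hf Hg r io n m Hnm h Hh x Hx.
  exact (Hg tt io n m Hnm _ (Hh x (Hf tt io m n Hnm x Hx))).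
Qed.

Lemma imp_decreasing_in a b (f : form [] a) (g : form [] b) :
  sem_increasing_in M i f -> sem_decreasing_in M i g -> sem_decreasing_in M i (FImp f g).
Proof.
  intros Hf Hg r io n m Hmn h Hh x Hx.
  exact (Hg tt io n m Hmn _ (Hh x (Hf tt io m n Hmn x Hx))).
Qed.

Lemma sem_body_step Th t (f : form (t :: Th) t) r io n m :
  (forall r', subset (sem M f r' (upd io i n)) (sem M f r' (upd io i m))) ->
  forall P Q, subset P Q ->
  subset (sem M f (P, r) (upd io i n)) (sem M f (Q, r) (upd io i m)).
Proof. intros Hf P Q HPQ x Hx; apply Hf, (sem_body_monotone M Th t f r _ P Q HPQ x Hx). Qed.

Lemma mu_increasing_in Th t tm (f : form (t :: Th) t) :
  sem_increasing_in M i f -> sem_increasing_in M i (FMu tm f).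
Proof.
  intros Hf r io n m Hnm x Hx; simpl in *.
  apply (iter_postfixed_increasing _ _ _ (ieval (upd io i n) tm)).
  - apply sem_body_monotone.
  - intros y [].
  - now apply ieval_upd_monotone.
  - revert x Hx; apply iter_subset; [intros y [] |].
    apply sem_body_step; intro r'; exact (Hf r' io n m Hnm).
Qed.

Lemma mu_decreasing_in Th t tm (f : form (t :: Th) t) :
  ioccurs i tm = false -> sem_decreasing_in M i f -> sem_decreasing_in M i (FMu tm f).
Proof.
  intros Htm Hf r io n m Hmn; simpl.
  rewrite (ieval_upd_notin io i tm n m Htm).
  apply iter_subset; [intros y [] |].
  apply sem_body_step; intro r'; exact (Hf r' io n m Hmn).
Qed.

Lemma nu_increasing_in Th t tm (f : form (t :: Th) t) :
  ioccurs i tm = false -> sem_increasing_in M i f -> sem_increasing_in M i (FNu tm f).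
Proof.
  intros Htm Hf r io n m Hnm; simpl.
  rewrite (ieval_upd_notin io i tm n m Htm).
  apply iter_subset; [intros y Hy; exact Hy |].
  apply sem_body_step; intro r'; exact (Hf r' io n m Hnm).
Qed.

Lemma nu_decreasing_in Th t tm (f : form (t :: Th) t) :
  sem_decreasing_in M i f -> sem_decreasing_in M i (FNu tm f).
Proof.
  intros Hf r io n m Hmn x Hx; simpl in *.
  apply (iter_prefixed_decreasing _ _ _ (ieval (upd io i n) tm)).
  - apply sem_body_monotone.
  - intros y _; exact I.
  - now apply ieval_upd_monotone.
  - revert x Hx; apply iter_subset; [intros y Hy; exact Hy |].
    apply sem_body_step; intro r'; exact (Hf r' io n m Hmn).
Qed.

End ConstructMonotonicity.

Scheme Pos_mut := Induction for Pos Sort Prop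
with Neg_mut := Induction for Neg Sort Prop.
Combined Scheme Pos_Neg_mut from Pos_mut, Neg_mut.

Theorem sem_monotone_of_polarity M i :
  (forall Th t (f : form Th t), Pos i f -> sem_increasing_in M i f) /\
  (forall Th t (f : form Th t), Neg i f -> sem_decreasing_in M i f).
Proof.
  apply Pos_Neg_mut; intros;
    auto using ex_increasing_in, all_decreasing_in, imp_increasing_in, imp_decreasing_in,
      mu_increasing_in, mu_decreasing_in, nu_increasing_in, nu_decreasing_in;
    unfold sem_increasing_in, sem_decreasing_in, subset in *; simpl;
    intros r io k l Hkl x Hx.
  all: try solve [revert x Hx; apply sem_upd_notin; assumption | firstorder].
  all: destruct Hx as [y [Hy ->]]; exists y; eauto.
Qed.

Theorem lemma5p5 (M : model) (s : pol) (Th : ctx) (t : ty) (phi : form Th t)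
  (Hphi : inL s phi) (rho : env M Th) (iota : nat -> nat) (i : nat) :
  (Pos i phi -> forall n m : nat, n <= m ->
     forall x, sem M phi rho (upd iota i n) x -> sem M phi rho (upd iota i m) x) /\
  (Neg i phi -> forall n m : nat, m <= n ->
     forall x, sem M phi rho (upd iota i n) x -> sem M phi rho (upd iota i m) x).
Proof.
  destruct (sem_monotone_of_polarity M i) as [Hpos Hneg].
  split; intros Hpol n m Hnm.
  - exact (Hpos Th t phi Hpol rho iota n m Hnm).
  - exact (Hneg Th t phi Hpol rho iota n m Hnm).
Qed.
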